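(* Assume the following setting. (i) $X$ is a Banach space, and for each $0<h<1$, $X_h\subseteq X$ is a closed subspace. (ii) $\pi_h:X\to X_h$ is bounded and linear, with $\Vert\pi_h\Vert_{L(X)}$ bounded independently of $h$ and $\pi_hx=x$ for $x\in X_h$. (iii) $A:D(A)\subseteq X\to X$ is a closed, densely defined linear operator, and there are $\lambda\ge0$, $\delta\in(0,\pi/2)$, $M\ge1$ with $\sigma(\lambda+A)\subseteq\Sigma_\delta$ and $\Vert(z-\lambda-A)^{-1}x\Vert_X\le\frac M{|z|}\Vert x\Vert_X$ for all $x\in X$, $z\notin\Sigma_\delta$. (iv) $A_h:X_h\to X_h$ are linear operators with $\sigma(\lambda+A_h)\subseteq\Sigma_\delta$ and $\Vert(z-\lambda-A_h)^{-1}x\Vert_X\le\frac M{|z|}\Vert x\Vert_X$ for all $x\in X_h$, $z\notin\Sigma_\delta$, for all $h$. (v) For some $r>0$, $\Vert((\lambda+A)^{-1}-(\lambda+A_h)^{-1}\pi_h)x\Vert_X\le Ch^r\Vert x\Vert_X$ for all $x\in X$. (vi) $\Vert A_hx\Vert_X\le Ch^{-r}\Vert x\Vert_X$ for all $x\in X_h$. Then there is $C>0$, independent of $h$, such that $$\Vert(\lambda+A_h)\pi_hx\Vert_X\le C\Vert(\lambda+A)x\Vert_X\quad\text{for all } x\in D(A).$$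
   Context: $\Sigma_\delta:=\{z\in\mathbb{C}\setminus\{0\}:|\arg z|<\delta\}$. *)

From HB Require Import structures.
From mathcomp Require Import all_boot all_order all_algebra.
From mathcomp Require Import complex.
From mathcomp Require Import all_classical all_reals all_analysis.
Import Order.TTheory GRing.Theory Num.Theory.

Set Implicit Arguments.
Unset Strict Implicit.
Unset Printing Implicit Defensive.

Local Open Scope ring_scope.
Local Open Scope classical_set_scope.
Local Open Scope complex_scope.

(* Complex Banach spaces: V : completeNormedModType R[i].  Norms `|x| take
   values in R[i] (they are real, nonnegative). *)

(* The sector Sigma_delta = { z in C \ {0} : |arg z| < delta }, written
   literally: z <> 0 and z = |z| e^{i theta} for some theta with |theta| < delta. *)
Definition sector (R : realType) (delta : R) : set R[i] :=
  [set z | z != 0 /\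
     exists theta : R, `|theta| < delta /\
       z = `|z| * ((cos theta)%:C + 'i * (sin theta)%:C)].

Definition lin_subspace (R : realType) (V : normedModType R[i]) (S : set V) :=
  S 0 /\ forall (a : R[i]) (x y : V), S x -> S y -> S (a *: x + y).

Definition linear_on (R : realType) (V : normedModType R[i]) (D : set V)
    (T : V -> V) :=
  forall (a : R[i]) (x y : V), D x -> D y -> T (a *: x + y) = a *: T x + T y.

Definition closed_op (R : realType) (V : normedModType R[i]) (D : set V)
    (T : V -> V) :=
  closed [set p : V * V | D p.1 /\ p.2 = T p.1].

Definition inverse_on (R : realType) (V : normedModType R[i]) (D Y : set V)
    (T S : V -> V) :=
  (forall y, Y y -> D (S y) /\ T (S y) = y) /\ (forall x, D x -> S (T x) = x).

Definition lshift_op (R : realType) (V : normedModType R[i]) (lam : R[i])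
    (T : V -> V) : V -> V := fun x => lam *: x + T x.

Definition zsub_op (R : realType) (V : normedModType R[i]) (z : R[i])
    (T : V -> V) : V -> V := fun x => z *: x - T x.

(* resolvent set of the operator T : D (subset of Y) -> Y, with Y the ambient
   space: z - T : D -> Y is bijective with bounded inverse *)
Definition resolvent_set (R : realType) (V : normedModType R[i]) (D Y : set V)
    (T : V -> V) : set R[i] :=
  [set z | exists S : V -> V, inverse_on D Y (zsub_op z T) S /\
      exists c : R, forall y, Y y -> `|S y| <= c%:C * `|y|].

Definition spectrum (R : realType) (V : normedModType R[i]) (D Y : set V)
    (T : V -> V) : set R[i] := ~` resolvent_set D Y T.

Definition resolvent_bound (R : realType) (V : normedModType R[i]) (D Y : set V)
    (T : V -> V) (delta M : R) :=
  forall z : R[i], z != 0 -> ~ sector delta z ->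
  forall S : V -> V, inverse_on D Y (zsub_op z T) S ->
  forall y, Y y -> `|S y| <= (M%:C / `|z|) * `|y|.

From HB Require Import structures.
From mathcomp Require Import all_boot all_order all_algebra.
From mathcomp Require Import complex.
From mathcomp Require Import ring.
From mathcomp Require Import all_classical all_reals all_analysis.
Import Order.TTheory GRing.Theory Num.Theory.
Local Open Scope ring_scope.
Local Open Scope classical_set_scope.
Local Open Scope complex_scope.

Set Implicit Arguments.
Unset Strict Implicit.

(* For x in D(A) put y = (lam + A) x and u = (lam + A_h)^-1 pi_h y, an element
   of X_h.  Then pi_h x = u + pi_h (x - u), hence
     (lam + A_h) pi_h x = pi_h y + (lam + A_h) pi_h (x - u).
   Since x = (lam + A)^-1 y, the approximation property (v) gives
   |x - u| <= C h^r |y|, while the inverse estimate (vi) loses at most a factor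
   lam + C h^-r on X_h; the two powers of h cancel. *)

Section LinearOn.
Variables (R : realType) (V : normedModType R[i]).

Lemma lin_subspaceT : lin_subspace [set: V].
Proof. by []. Qed.

Lemma lin_subspaceN (D : set V) x : lin_subspace D -> D x -> D (- x).
Proof. by move=> [D0 HD] Dx; have := HD (-1) x 0 Dx D0; rewrite addr0 scaleN1r. Qed.

Lemma linear_onD (D : set V) (T : V -> V) x y : linear_on D T ->
  D x -> D y -> T (x + y) = T x + T y.
Proof. by move=> HT Dx Dy; have := HT 1 x y Dx Dy; rewrite !scale1r. Qed.

Lemma linear_onB (D : set V) (T : V -> V) x y : linear_on D T ->
  D x -> D y -> T (x - y) = T x - T y.
Proof.
move=> HT Dx Dy; have := HT (-1) y x Dy Dx.
by rewrite !scaleN1r addrC [- T y + _]addrC.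
Qed.

End LinearOn.

Section Invertibility.
Variables (R : realType) (V : normedModType R[i]).

Lemma sector_neq0 (delta : R) : ~ sector delta 0.
Proof. by case; rewrite eqxx. Qed.

(* The inverse of T is y |-> S (- y), where S inverts zsub_op 0 T = - T. *)
Lemma resolvent_set0_inverse (D Y : set V) (T : V -> V) :
  lin_subspace Y -> resolvent_set D Y T 0 -> exists S, inverse_on D Y T S.
Proof.
move=> HY [S [[SY ST] _]]; exists (fun y => S (- y)); split.
- move=> y Yy; have [DS] := SY _ (lin_subspaceN HY Yy).
  by rewrite /zsub_op scale0r sub0r => /oppr_inj.
- by move=> x Dx; have := ST x Dx; rewrite /zsub_op scale0r sub0r.
Qed.

Lemma spectrum_sub_sector_inverse (D Y : set V) (T : V -> V) (delta : R) :
  lin_subspace Y -> spectrum D Y T `<=` sector delta ->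
  exists S, inverse_on D Y T S.
Proof.
move=> HY Hspec; apply: resolvent_set0_inverse => //.
by apply: contrapT => /Hspec; apply: sector_neq0.
Qed.

End Invertibility.

Section ShiftedOperator.
Variables (R : realType) (V : normedModType R[i]).

Lemma linear_on_lshift (D : set V) (T : V -> V) (l : R[i]) :
  linear_on D T -> linear_on D (lshift_op l T).
Proof.
move=> HT a x y Dx Dy; rewrite /lshift_op HT // !scalerDr !scalerA [l * a]mulrC.
by rewrite -!addrA; congr (_ + _); rewrite addrCA.
Qed.

Lemma norm_lshift_le (T : V -> V) (l c : R) x : 0 <= l ->
  `|T x| <= c%:C * `|x| -> `|lshift_op l%:C T x| <= (l + c)%:C * `|x|.
Proof.
move=> l0 HTx; apply: le_trans (ler_normD _ _) _.
by rewrite normrZ ger0_norm ?ler0c // rmorphD mulrDl lerD.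
Qed.

End ShiftedOperator.

Section DiscreteStability.
Variables (R : realType) (V : normedModType R[i]).
Variables (D Dh : set V) (T S Th Sh pi : V -> V) (K e b : R).
Hypotheses (K0 : 0 <= K) (b0 : 0 <= b).
Hypotheses (pi_lin : linear_on setT pi) (pi_range : forall x, Dh (pi x))
  (pi_id : forall x, Dh x -> pi x = x)
  (pi_bdd : forall x, `|pi x| <= K%:C * `|x|).
Hypotheses (Th_lin : linear_on Dh Th)
  (HS : inverse_on D setT T S) (HSh : inverse_on Dh Dh Th Sh).
Hypotheses (approx : forall y, `|S y - Sh (pi y)| <= e%:C * `|y|)
  (inverse_est : forall v, Dh v -> `|Th v| <= b%:C * `|v|).

Lemma discrete_stability x : D x ->
  `|Th (pi x)| <= (K + b * (K * e))%:C * `|T x|.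
Proof.
move=> Dx; set y := T x; set u := Sh (pi y); set v := pi (x - u).
have [Dh_u Th_u] := HSh.1 _ (pi_range y).
have pi_x : pi x = u + v by rewrite /v (linear_onB pi_lin) // (pi_id Dh_u) addrC subrK.
have Th_pi_x : Th (pi x) = pi y + Th v.
  by rewrite pi_x (linear_onD Th_lin) // ?Th_u //; apply: pi_range.
have x_u : `|x - u| <= e%:C * `|y| by rewrite -{1}(HS.2 x Dx); apply: approx.
have v_le : `|v| <= (K * e)%:C * `|y|.
  by apply: le_trans (pi_bdd _) _; rewrite rmorphM -mulrA ler_wpM2l ?ler0c.
have Th_v : `|Th v| <= (b * (K * e))%:C * `|y|.
  apply: le_trans (inverse_est (pi_range _)) _.
  by rewrite rmorphM -mulrA ler_wpM2l ?ler0c.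
rewrite Th_pi_x rmorphD mulrDl; apply: le_trans (ler_normD _ _) _.
exact: lerD.
Qed.

End DiscreteStability.

Lemma powR_cancel_le (R : realType) (lam K C h r : R) :
  0 <= lam -> 0 <= K -> 0 < C -> 0 < h < 1 -> 0 < r ->
  (lam + C * h `^ (- r)) * (K * (C * h `^ r)) <= lam * K * C + K * C ^+ 2.
Proof.
move=> lam0 K0 C0 /andP[h0 h1] r0.
have hr1 : h `^ r <= 1.
  by rewrite -(powRr0 h); apply: ger_powR (ltW r0); rewrite h0 ltW.
have hrN : h `^ (- r) * h `^ r = 1 by rewrite powRN mulVf // gt_eqF ?powR_gt0.
have -> : (lam + C * h `^ (- r)) * (K * (C * h `^ r))
          = lam * K * C * h `^ r + K * C ^+ 2 * (h `^ (- r) * h `^ r) by ring.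
by rewrite hrN mulr1 lerD2r ler_piMr // !mulr_ge0 // ltW.
Qed.

Unset Implicit Arguments.

Theorem lemma2p10 (R : realType) (X : completeNormedModType R[i])
  (DA : set X) (A : X -> X) (Xh : R -> set X) (pih : R -> X -> X)
  (Ah : R -> X -> X) (lam delta M r C : R)
  (* (i) *)
  (HXh : forall h : R, 0 < h < 1 -> lin_subspace (Xh h) /\ closed (Xh h))
  (* (ii) *)
  (Hpi_lin : forall h : R, 0 < h < 1 -> linear_on setT (pih h))
  (Hpi_range : forall h : R, 0 < h < 1 -> forall x, Xh h (pih h x))
  (Hpi_proj : forall h : R, 0 < h < 1 -> forall x, Xh h x -> pih h x = x)
  (Hpi_bdd : exists K : R, forall h : R, 0 < h < 1 ->
                forall x, `|pih h x| <= K%:C * `|x|)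
  (* (iii) *)
  (HDA : lin_subspace DA) (HA_lin : linear_on DA A) (HA_closed : closed_op DA A)
  (HA_dense : closure DA = setT)
  (Hlam : 0 <= lam) (Hdelta : 0 < delta < pi / 2) (HM : 1 <= M)
  (HA_spec : spectrum DA setT (lshift_op (lam%:C) A) `<=` sector delta)
  (HA_res : resolvent_bound DA setT (lshift_op (lam%:C) A) delta M)
  (* (iv) *)
  (HAh_range : forall h : R, 0 < h < 1 -> forall x, Xh h x -> Xh h (Ah h x))
  (HAh_lin : forall h : R, 0 < h < 1 -> linear_on (Xh h) (Ah h))
  (HAh_spec : forall h : R, 0 < h < 1 ->
     spectrum (Xh h) (Xh h) (lshift_op (lam%:C) (Ah h)) `<=` sector delta)
  (HAh_res : forall h : R, 0 < h < 1 ->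
     resolvent_bound (Xh h) (Xh h) (lshift_op (lam%:C) (Ah h)) delta M)
  (* (v) *)
  (Hr : 0 < r) (HC : 0 < C)
  (Happrox : forall h : R, 0 < h < 1 -> forall S Sh : X -> X,
     inverse_on DA setT (lshift_op (lam%:C) A) S ->
     inverse_on (Xh h) (Xh h) (lshift_op (lam%:C) (Ah h)) Sh ->
     forall x, `|S x - Sh (pih h x)| <= (C * h `^ r)%:C * `|x|)
  (* (vi) *)
  (Hinv : forall h : R, 0 < h < 1 -> forall x, Xh h x ->
     `|Ah h x| <= (C * h `^ (- r))%:C * `|x|) :
  exists C' : R, 0 < C' /\
    forall h : R, 0 < h < 1 -> forall x, DA x ->
      `|lshift_op (lam%:C) (Ah h) (pih h x)| <= C'%:C * `|lshift_op (lam%:C) A x|.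
Proof.
have [K HK] := Hpi_bdd; set K' := `|K|.
have K'0 : 0 <= K' := normr_ge0 K.
have lamKC0 : 0 <= lam * K' * C by rewrite !mulr_ge0 // ltW.
have KC20 : 0 <= K' * C ^+ 2 by rewrite mulr_ge0 // sqr_ge0.
exists (K' + lam * K' * C + K' * C ^+ 2 + 1); split.
  by rewrite ltr_wpDl ?ltr01 // !addr_ge0.
move=> h hh x DAx.
have [S HS] := spectrum_sub_sector_inverse (@lin_subspaceT _ X) HA_spec.
have [Sh HSh] := spectrum_sub_sector_inverse (HXh h hh).1 (HAh_spec h hh).
have pi_bdd y : `|pih h y| <= K'%:C * `|y|.
  by apply: le_trans (HK h hh y) _; rewrite ler_wpM2r // lecR ler_norm.
have b0 : 0 <= lam + C * h `^ (- r) by rewrite addr_ge0 // mulr_ge0 ?powR_ge0 ?ltW.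
apply: le_trans (discrete_stability K'0 b0 (Hpi_lin h hh) (Hpi_range h hh)
  (Hpi_proj h hh) pi_bdd (linear_on_lshift _ (HAh_lin h hh)) HS HSh
  (Happrox h hh S Sh HS HSh) _ DAx) _.
- by move=> v Xv; apply: norm_lshift_le => //; apply: Hinv.
- rewrite ler_wpM2r // lecR -!addrA lerD2l.
  apply: le_trans (powR_cancel_le Hlam K'0 HC hh Hr) _.
  by rewrite addrA lerDl.
Qed.
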